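(* Let $d\ge0$ and let $a,b,c$ be nonnegative integers such that $s=a+b+c-d$ is positive. Then in $S_{\mathbb{Z}}(2,d)$ the following identities hold: $$f^{(a)}\binom{H_2}{b}e^{(c)}=\sum_{k=s}^{\min(a,c)}(-1)^{k-s}\binom{k-1}{s-1}\binom{b+k}{k}f^{(a-k)}\binom{H_2}{b+k}e^{(c-k)},$$ $$e^{(a)}\binom{H_1}{b}f^{(c)}=\sum_{k=s}^{\min(a,c)}(-1)^{k-s}\binom{k-1}{s-1}\binom{b+k}{k}e^{(a-k)}\binom{H_1}{b+k}f^{(c-k)}$$ (an empty sum being $0$).
   Context: Let $E=\mathbb{Q}^2$ with standard basis $e_1,e_2$, $E_{\mathbb{Z}}=\mathbb{Z}e_1\oplus\mathbb{Z}e_2$. Let $\rho_d:U(\mathfrak{gl}_2)\to\mathrm{End}_{\mathbb{Q}}(E^{\otimes d})$ be the representation in which $x\in\mathfrak{gl}_2$ acts as $\sum_{i=1}^d 1\otimes\cdots\otimes x\otimes\cdots\otimes 1$; its image is the Schur algebra $S_{\mathbb{Q}}(2,d)$. The integral Schur algebra $S_{\mathbb{Z}}(2,d)=\mathrm{End}_{\mathbb{Z}\Sigma_d}(E_{\mathbb{Z}}^{\otimes d})$ is regarded as a subring of $S_{\mathbb{Q}}(2,d)$. Write $e,f,H_1,H_2$ for the images under $\rho_d$ of the matrix units $e_{12},e_{21},e_{11},e_{22}$. For an element $T$ and integer $m\ge0$, $T^{(m)}=T^m/m!$ and $\binom{T}{m}=T(T-1)\cdots(T-m+1)/m!$; both are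 defined to be $0$ for negative $m$. *)

From HB Require Import structures.
From mathcomp Require Import all_boot all_order all_algebra.
Set Implicit Arguments. Unset Strict Implicit. Unset Printing Implicit Defensive.
Import Order.TTheory GRing.Theory Num.Theory.
Local Open Scope ring_scope.

(* Basis of E^{(x)d}: words w : 'I_d -> 'I_2, w standing for
   e_{w 0 + 1} (x) ... (x) e_{w (d-1) + 1}  (index 0 <-> e_1, 1 <-> e_2). *)
Definition word (d : nat) := {ffun 'I_d -> 'I_2}.

Definition tdim (d : nat) : nat := #|word d|.

(* Endomorphisms of E^{(x)d} as matrices w.r.t. the tensor basis, column
   convention: M i j = coefficient of basis vector i in M (basis vector j). *)
Definition endo (d : nat) := 'M[rat]_(tdim d).

(* rho_d(x) = sum_j 1 (x) .. (x) x (in slot j) (x) .. (x) 1 *)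
Definition rho (d : nat) (x : 'M[rat]_2) : endo d :=
  \matrix_(i, j)
    \sum_(k < d)
      (x (@enum_val (word d) predT i k) (@enum_val (word d) predT j k) *
       ([forall l : 'I_d, (l != k) ==>
           (@enum_val (word d) predT i l == @enum_val (word d) predT j l)])%:R).

Definition eop (d : nat) : endo d := rho d (delta_mx 0 1).
Definition fop (d : nat) : endo d := rho d (delta_mx 1 0).
Definition H1op (d : nat) : endo d := rho d (delta_mx 0 0).
Definition H2op (d : nat) : endo d := rho d (delta_mx 1 1).

Definition divpow (d : nat) (T : endo d) (m : nat) : endo d :=
  (m`!%:R : rat)^-1 *: T ^+ m.

Definition binomT (d : nat) (T : endo d) (m : nat) : endo d :=
  (m`!%:R : rat)^-1 *: \prod_(i < m) (T - i%:R).

From HB Require Import structures.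
From mathcomp Require Import all_boot all_order all_algebra.
From mathcomp Require Import ring zify.
Set Implicit Arguments. Unset Strict Implicit. Unset Printing Implicit Defensive.
Import Order.TTheory GRing.Theory Num.Theory.
Local Open Scope ring_scope.

(* Compare both sides entrywise in the basis of words u, w of E^(x)d.  Let A and B be the
   sets of positions carrying the weight letter (e_2 for the first identity, e_1 for the
   second) in u and w.  The (u, w) entry of f^(a) (H choose b) e^(c) sums C(#|V|, b) over
   the V included in A :&: B with #|A| = #|V| + a and #|B| = #|V| + c, so it equals
   C(n, b) C(#|A :&: B|, n) with n = #|A| - a (and vanishes unless #|A| - a + c = #|B|).
   Multiplied by C(b + k, k), the entry of the k-th term on the right is this same number
   times C(j, k) with j = #|A :&: B| - n, so the identity reduces to
   sum_(s <= k <= j) (-1)^(k - s) C(k - 1, s - 1) C(j, k) = 1, where j >= s holds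
   because #|A :|: B| <= d. *)

Lemma mul_bin_trinomial (j i r : nat) : (r <= i)%N ->
  ('C(j, i) * 'C(i, r) = 'C(j, r) * 'C(j - r, i - r))%N.
Proof.
move=> le_ri; have [le_ij|lt_ji] := leqP i j; last first.
  rewrite bin_small // mul0n; have [le_rj|lt_jr] := leqP r j; last by rewrite bin_small.
  by rewrite (@bin_small (j - r)) ?muln0 //; lia.
have facts_gt0 : (0 < r`! * (i - r)`! * (j - i)`!)%N by rewrite !muln_gt0 !fact_gt0.
apply/eqP; rewrite -(eqn_pmul2r facts_gt0); apply/eqP.
have eq_ji : (j - r - (i - r) = j - i)%N by lia.
have := @bin_fact (j - r) (i - r) (leq_sub2r r le_ij); rewrite eq_ji => fact_jr.
transitivity ('C(j, i) * ('C(i, r) * (r`! * (i - r)`!)) * (j - i)`!)%N; first by ring.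
rewrite bin_fact // -mulnA bin_fact // -(bin_fact (leq_trans le_ri le_ij)) -fact_jr.
ring.
Qed.

Lemma mul_bin_shift (n m b k : nat) :
  ('C(n + k, b + k) * 'C(m, n + k) * 'C(b + k, k) = 'C(n, b) * 'C(m, n) * 'C(m - n, k))%N.
Proof.
have := @mul_bin_trinomial (n + k) (b + k) k (leq_addl _ _); rewrite !addnK => tri_nk.
have := @mul_bin_trinomial m (n + k) n (leq_addr _ _); rewrite addKn => tri_m.
have bin_sym : 'C(n + k, k) = 'C(n + k, n) by rewrite -bin_sub ?leq_addl // addnK.
by rewrite mulnAC tri_nk bin_sym mulnAC [('C(n + k, n) * _)%N]mulnC tri_m mulnC mulnA.
Qed.

Lemma natr_ffact_prod (R : pzRingType) (n b : nat) :
  \prod_(i < b) (n%:R - i%:R) = (n ^_ b)%:R :> R.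
Proof.
elim: b => [|b IHb]; first by rewrite big_ord0 ffactn0.
rewrite big_ord_recr /= IHb ffactnSr.
have [le_bn|lt_nb] := leqP b n; first by rewrite natrM natrB.
by rewrite ffact_small // !mul0r.
Qed.

Lemma sum_signr_bin (R : pzRingType) (n : nat) :
  \sum_(i < n.+1) (-1) ^+ i * 'C(n, i)%:R = (n == 0)%:R :> R.
Proof.
have := exprBn_comm n (commr1 (1 : R)); rewrite subrr expr0n => ->.
by apply: eq_bigr => i _; rewrite !expr1n !mulr1 mulr_natr.
Qed.

Lemma sum_signr_binM (R : pzRingType) (j r : nat) :
  \sum_(r <= i < j.+1) (-1) ^+ (i - r) * 'C(i, r)%:R * 'C(j, i)%:R = (j == r)%:R :> R.
Proof.
have [le_rj|lt_jr] := leqP r j; last by rewrite big_geq ?ltn_eqF.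
rewrite -{1}(add0n r) big_addn (_ : (j.+1 - r = (j - r).+1)%N); last by lia.
under eq_bigr => i _ do rewrite addnK -mulrA -natrM mulnC mul_bin_trinomial ?leq_addl //
  addnK natrM mulrA -commr_sign -mulrA.
rewrite -big_distrr big_mkord sum_signr_bin subn_eq0 /=.
have [->|ne_jr] := eqVneq j r; first by rewrite binn leqnn mulr1.
by rewrite leqNgt ltn_neqAle eq_sym ne_jr le_rj mulr0.
Qed.

Lemma sum_signr_bin_pred (R : pzRingType) (s j : nat) : (0 < s <= j)%N ->
  \sum_(s <= k < j.+1) (-1) ^+ (k - s) * 'C(k.-1, s.-1)%:R * 'C(j, k)%:R = 1 :> R.
Proof.
case/andP=> s_gt0 /subnKC <-; move: (j - s)%N => t.
elim: t s s_gt0 => [|t IHt] s s_gt0.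
  by rewrite addn0 big_nat1 subnn !binn expr0 !mulr1.
(* By Pascal's rule the sum for s is the difference of the sum of sum_signr_binM,
   which vanishes, and minus the sum for s.+1. *)
have pascal k : (s <= k)%N -> 'C(k.-1, s.-1) = ('C(k, s) - 'C(k.-1, s))%N.
  by case: k s s_gt0 => [|k] [|s] //= _ _; rewrite binS addKn.
rewrite (eq_big_nat _ _ (F2 := fun k =>
    (-1) ^+ (k - s) * 'C(k, s)%:R * 'C(s + t.+1, k)%:R -
    (-1) ^+ (k - s) * 'C(k.-1, s)%:R * 'C(s + t.+1, k)%:R)); last first.
  move=> k /andP[le_sk _]; rewrite pascal // natrB ?leq_bin2l ?leq_pred //.
  by rewrite mulrBr mulrBl.
rewrite sumrB sum_signr_binM (_ : (s + t.+1 == s) = false); last by lia.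
rewrite big_ltn; last by lia.
rewrite bin_small ?prednK // mulr0 mul0r add0r.
rewrite -addSnnS -[RHS](IHt s.+1) // add0r -sumrN.
apply: eq_big_nat => k /andP[lt_sk _].
by rewrite -(subnSK lt_sk) exprS mulN1r !mulNr opprK.
Qed.

(* The (u, w) entry of f^(a) (H choose b) e^(c) when A and B count the positions of the
   weight letter in u and w and m counts the common ones. *)
Definition fHe_entry (A B m a b c : nat) : rat :=
  if ((a <= A) && (A - a + c == B))%N then ('C(A - a, b) * 'C(m, A - a))%:R else 0.

Lemma fHe_entry_shift (A B m a b c k : nat) : (k <= minn a c)%N ->
  'C(b + k, k)%:R * fHe_entry A B m (a - k) (b + k) (c - k) =
  fHe_entry A B m a b c * 'C(m - (A - a), k)%:R.
Proof.
rewrite leq_min => /andP[le_ka le_kc]; rewrite /fHe_entry.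
have [le_aA|lt_Aa] := leqP a A; last first.
  case: ifP => [/andP[le_akA _]|_]; last by rewrite mulr0 mul0r.
  by rewrite (@bin_small (A - (a - k))) ?mul0n ?mulr0 ?mul0r //; lia.
have -> : (A - (a - k) = (A - a) + k)%N by lia.
have -> : (A - a + k + (c - k) = A - a + c)%N by lia.
rewrite (_ : (a - k <= A)%N) /=; last by lia.
by case: ifP; rewrite ?mulr0 ?mul0r // -!natrM mulnC -mul_bin_shift.
Qed.

Lemma fHe_entry_straighten (A B m a b c d : nat) :
  (m <= A)%N -> (m <= B)%N -> (A + B <= d + m)%N -> (0 < a + b + c - d)%N ->
  fHe_entry A B m a b c =
  \sum_((a + b + c - d)%N <= k < (minn a c).+1)
    ((-1) ^+ (k - (a + b + c - d)) * 'C(k.-1, (a + b + c - d).-1)%:R * 'C(b + k, k)%:R)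
    * fHe_entry A B m (a - k) (b + k) (c - k).
Proof.
set s := (a + b + c - d)%N => le_mA le_mB le_ABd s_gt0.
(* Only the factor C(m - (A - a), k) depends on k, and s <= m - (A - a) <= minn a c. *)
under eq_big_nat => k /andP[_ le_k] do rewrite -mulrA fHe_entry_shift // mulrCA.
rewrite -big_distrr /=.
have [->|] := eqVneq (fHe_entry A B m a b c) 0; first by rewrite mul0r.
rewrite /fHe_entry; case: ifP => [/andP[le_aA /eqP eq_B]|]; last by rewrite eqxx.
rewrite pnatr_eq0 muln_eq0 negb_or -!lt0n !bin_gt0 => /andP[le_b le_m].
set j := (m - (A - a))%N.
have le_sj : (s <= j)%N by rewrite /s /j; lia.
have le_j : (j <= minn a c)%N by rewrite leq_min /j; lia.
rewrite (big_cat_nat (n := j.+1)) ?ltnS ?(leqW le_sj) //= [X in _ + X]big1_seq ?addr0.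
  by rewrite sum_signr_bin_pred ?mulr1 ?s_gt0.
by move=> k /andP[_]; rewrite mem_index_iota => /andP[lt_jk _]; rewrite (@bin_small j) ?mulr0.
Qed.

Lemma sum_subsets_fHe_entry (T : finType) (A B : {set T}) (a b c : nat) :
  \sum_(V : {set T})
    ((V \subset A :&: B) && (#|A| == #|V| + a) && (#|B| == #|V| + c))%N%:R * 'C(#|V|, b)%:R =
  fHe_entry #|A| #|B| #|A :&: B| a b c.
Proof.
rewrite /fHe_entry; case: ifP => [/andP[le_aA /eqP eq_B]|not_cond]; last first.
  rewrite big1 // => V _; case: andP => [[/andP[_ /eqP eq_A] /eqP eq_B]|]; last by rewrite mul0r.
  by move: not_cond; rewrite eq_A eq_B; lia.
set D := [set V : {set T} | (V \subset A :&: B) && (#|V| == #|A| - a)%N].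
transitivity (\sum_(V in D) 'C(#|A| - a, b)%:R : rat); last first.
  by rewrite sumr_const cards_draws natrM mulr_natr.
rewrite [RHS]big_mkcond; apply: eq_bigr => V _; rewrite inE.
have [eq_V|ne_V] := eqVneq #|V| (#|A| - a)%N.
  by rewrite eq_V -eq_B subnK // !eqxx !andbT; case: ifP; rewrite ?mul1r ?mul0r.
rewrite andbF; case: andP => [[/andP[_ /eqP eq_A] _]|]; last by rewrite mul0r.
by move: ne_V; rewrite eq_A addnK eqxx.
Qed.

Section TensorCoefficients.

Variable d : nat.
Local Notation word := (word d).

Definition coef (M : endo d) (u w : word) : rat := M (enum_rank u) (enum_rank w).

Lemma coefP (M N : endo d) : (forall u w, coef M u w = coef N u w) -> M = N.
Proof.
move=> eq_coef; apply/matrixP => i j.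
by have := eq_coef (enum_val i) (enum_val j); rewrite /coef !enum_valK.
Qed.

Lemma coefM (M N : endo d) u w : coef (M * N) u w = \sum_(v : word) coef M u v * coef N v w.
Proof. by rewrite /coef mxE (reindex enum_rank) //; apply/onW_bij/enum_rank_bij. Qed.

Lemma coef1 u w : coef 1 u w = (u == w)%:R.
Proof. by rewrite /coef mxE (inj_eq enum_rank_inj). Qed.

Lemma coef_nat (n : nat) u w : coef n%:R u w = (u == w)%:R * n%:R.
Proof. by rewrite /coef mulmxnE -/(coef 1 u w) coef1 mulr_natr. Qed.

Lemma coefZ (r : rat) (M : endo d) u w : coef (r *: M) u w = r * coef M u w.
Proof. by rewrite /coef mxE. Qed.

Lemma coefB (M N : endo d) u w : coef (M - N) u w = coef M u w - coef N u w.
Proof. by rewrite /coef !mxE. Qed.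

Lemma coef_sum I (r : seq I) (P : pred I) (F : I -> endo d) u w :
  coef (\sum_(i <- r | P i) F i) u w = \sum_(i <- r | P i) coef (F i) u w.
Proof. by rewrite /coef summxE. Qed.

Lemma coef_rho (x : 'M[rat]_2) u w :
  coef (rho d x) u w =
  \sum_(k < d) x (u k) (w k) * [forall l : 'I_d, (l != k) ==> (u l == w l)]%:R.
Proof. by rewrite /coef mxE !enum_rankK. Qed.

Definition occ (j : 'I_2) (w : word) : {set 'I_d} := [set k | w k == j].

Definition setw (u : word) (k : 'I_d) (j : 'I_2) : word :=
  [ffun l => if l == k then j else u l].

Lemma neq_I2 (i j z : 'I_2) : i != j -> (z != j) = (z == i).
Proof. by case: i j z => [[|[|]]] // ? [[|[|]]] // ? [[|[|]]]. Qed.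

Lemma occ_inj j : injective (occ j).
Proof.
move=> u w eq_occ; apply/ffunP => k.
have : (k \in occ j u) = (k \in occ j w) by rewrite eq_occ.
rewrite !inE {eq_occ}.
by move: (u k) (w k) j => [[|[|]]] // ? [[|[|]]] // ? [[|[|]]] // ? /= _; apply: val_inj.
Qed.

Lemma occC i j u : i != j -> occ j u = ~: occ i u.
Proof. by move=> ne_ij; apply/setP => k; rewrite !inE -(neq_I2 _ ne_ij) negbK. Qed.

Lemma card_occ j u : (#|occ j u| <= d)%N.
Proof. by rewrite -[d in (_ <= d)%N]card_ord max_card. Qed.

Lemma occ_setw (u : word) (k : 'I_d) (i j : 'I_2) :
  i != j -> u k = i -> occ j (setw u k j) = k |: occ j u.
Proof.
move=> ne_ij uk; apply/setP => l; rewrite !inE ffunE.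
by have [->|//] := eqVneq l k; rewrite eqxx uk (negbTE ne_ij).
Qed.

Lemma setwP (u v : word) (k : 'I_d) (j : 'I_2) :
  ([forall l : 'I_d, (l != k) ==> (u l == v l)] && (v k == j)) = (v == setw u k j).
Proof.
apply/andP/eqP => [[/forallP agree /eqP vk]|->].
  apply/ffunP => l; rewrite ffunE; have [->//|ne_lk] := eqVneq l k.
  by apply/esym/eqP; have := agree l; rewrite ne_lk.
split; last by rewrite ffunE eqxx.
by apply/forallP => l; apply/implyP => ne_lk; rewrite ffunE (negbTE ne_lk).
Qed.

Lemma coef_rho_unitM i j (N : endo d) u w :
  coef (rho d (delta_mx i j) * N) u w =
  \sum_(k < d) (u k == i)%:R * coef N (setw u k j) w.
Proof.
rewrite coefM; under eq_bigr do rewrite coef_rho big_distrl /=.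
rewrite exchange_big; apply: eq_bigr => k _ /=.
have unit_coef (v : word) : delta_mx i j (u k) (v k) *
    [forall l : 'I_d, (l != k) ==> (u l == v l)]%:R = (u k == i)%:R * (v == setw u k j)%:R.
  rewrite -setwP mxE; case: (u k == i); case: (v k == j);
  by rewrite /= ?andbT ?andbF ?mulr1 ?mul0r ?mul1r.
under eq_bigr do rewrite unit_coef.
rewrite (bigD1 (setw u k j)) //= eqxx mulr1 big1 ?addr0 // => v /negbTE ne_v.
by rewrite ne_v mulr0 mul0r.
Qed.

Lemma coef_rho_unitX (i j : 'I_2) (n : nat) (u w : word) : i != j ->
  coef (rho d (delta_mx i j) ^+ n) u w =
  n`!%:R * ((occ j u \subset occ j w) && (#|occ j w| == #|occ j u| + n))%N%:R.
Proof.
move=> ne_ij; elim: n u => [|n IHn] u.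
  rewrite expr0 coef1 mul1r addn0; congr (nat_of_bool _)%:R.
  apply/eqP/andP => [->|[sub_uw /eqP eq_card]]; first by split.
  by apply/(occ_inj (j := j))/eqP; rewrite eqEcard sub_uw eq_card leqnn.
set cond := ((occ j u \subset occ j w) && (#|occ j w| == #|occ j u| + n.+1))%N.
have step k : (u k == i)%:R * coef (rho d (delta_mx i j) ^+ n) (setw u k j) w =
    ((u k == i) && (w k == j))%:R * (n`!%:R * cond%:R).
  case: eqP => [uk|_]; last by rewrite !mul0r.
  have k_notin : k \notin occ j u by rewrite inE uk.
  rewrite IHn (occ_setw ne_ij uk) cardsU1 k_notin subUset sub1set inE addSnnS /= !mul1r.
  by case: (w k == j); rewrite /= ?mul0r ?mulr0 ?mul1r.
rewrite exprS coef_rho_unitM; under eq_bigr do rewrite step.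
rewrite -big_distrl /= -natr_sum.
have -> : (\sum_k ((u k == i) && (w k == j)) = #|occ j w :\: occ j u|)%N.
  rewrite -sum1_card [RHS]big_mkcond; apply: eq_bigr => k _.
  by rewrite !inE (neq_I2 _ ne_ij) andbC.
rewrite /cond; case: andP => [[sub_uw /eqP eq_card]|_]; last by rewrite !mulr0.
by rewrite cardsD (setIidPr sub_uw) eq_card addKn factS natrM mulrA.
Qed.

Lemma coef_divpow_unit (i j : 'I_2) (n : nat) (u w : word) : i != j ->
  coef (divpow (rho d (delta_mx i j)) n) u w =
  ((occ j u \subset occ j w) && (#|occ j w| == #|occ j u| + n))%N%:R.
Proof.
move=> ne_ij; rewrite /divpow coefZ coef_rho_unitX // mulrA mulVf ?mul1r //.
by rewrite pnatr_eq0 -lt0n fact_gt0.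
Qed.

Lemma coef_divpow_unitC (i j : 'I_2) (n : nat) (u w : word) : i != j ->
  coef (divpow (rho d (delta_mx i j)) n) u w =
  ((occ i w \subset occ i u) && (#|occ i u| == #|occ i w| + n))%N%:R.
Proof.
move=> ne_ij; rewrite coef_divpow_unit // !(occC _ ne_ij) setCS.
have card_occC (v : word) : #|~: occ i v| = (d - #|occ i v|)%N.
  by have := cardsC (occ i v); rewrite card_ord; lia.
rewrite !card_occC; have := card_occ i u; have := card_occ i w.
by move: #|occ i u| #|occ i w| => m p le_p le_m; congr (_ && _)%:R; apply/eqP/eqP; lia.
Qed.

Definition diag_by (M : endo d) (f : word -> rat) :=
  forall u w, coef M u w = (u == w)%:R * f u.

Lemma coef_mul_diag (M : endo d) f : diag_by M f ->
  forall N u w, coef (N * M) u w = coef N u w * f w.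
Proof.
move=> diagM N u w; rewrite coefM (bigD1 w) //= diagM eqxx mul1r big1 ?addr0 // => v ne_vw.
by rewrite diagM (negbTE ne_vw) mul0r mulr0.
Qed.

Lemma setw_id (u : word) (k : 'I_d) : setw u k (u k) = u.
Proof. by apply/ffunP => l; rewrite ffunE; case: eqP => [->|]. Qed.

Lemma diag_rho_unit (x : 'I_2) : diag_by (rho d (delta_mx x x)) (fun u => #|occ x u|%:R).
Proof.
move=> u w; rewrite coef_rho.
have term k : delta_mx x x (u k) (w k) * [forall l, (l != k) ==> (u l == w l)]%:R =
    (u == w)%:R * (u k == x)%:R.
  rewrite mxE; have [uk|_] := eqVneq (u k) x; last by rewrite mul0r mulr0.
  by rewrite -natrM mulnb andbC setwP -uk setw_id eq_sym mulr1.
under eq_bigr do rewrite term.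
rewrite -big_distrr /= -natr_sum -sum1_card [in RHS]big_mkcond /=.
by congr (_ * _%:R); apply: eq_bigr => k _; rewrite inE; case: (u k == x).
Qed.

Lemma diag_binomT (x : 'I_2) (b : nat) :
  diag_by (binomT (rho d (delta_mx x x)) b) (fun u => 'C(#|occ x u|, b)%:R).
Proof.
have diag_prod : diag_by (\prod_(i < b) (rho d (delta_mx x x) - i%:R))
                         (fun u => \prod_(i < b) (#|occ x u|%:R - i%:R)).
  elim: b => [|b IHb] u w; first by rewrite !big_ord0 coef1 mulr1.
  have diag_sub : diag_by (rho d (delta_mx x x) - b%:R) (fun u => #|occ x u|%:R - b%:R).
    by move=> u' w'; rewrite coefB diag_rho_unit coef_nat mulrBr.
  rewrite !big_ord_recr (coef_mul_diag diag_sub) IHb -mulrA.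
  by case: eqVneq => [->|]; rewrite ?mul0r.
move=> u w; rewrite /binomT coefZ diag_prod natr_ffact_prod -bin_ffact natrM.
by rewrite mulrCA [_^-1 * _]mulrC mulfK // pnatr_eq0 -lt0n fact_gt0.
Qed.

Lemma sum_occ (x y : 'I_2) (F : {set 'I_d} -> rat) : x != y ->
  \sum_(v : word) F (occ x v) = \sum_(V : {set 'I_d}) F V.
Proof.
move=> ne_xy; rewrite [RHS](reindex (occ x)) //.
exists (fun V : {set 'I_d} => [ffun k : 'I_d => if k \in V then x else y]) => [v _|V _].
  apply/ffunP => k; rewrite ffunE inE; case: eqVneq => [<-//|].
  by rewrite (neq_I2 _ (_ : y != x)) 1?eq_sym // => /eqP.
by apply/setP => k; rewrite inE ffunE; case: (k \in V); rewrite ?eqxx // eq_sym (negbTE ne_xy).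
Qed.

Lemma coef_fHe (x y : 'I_2) (a b c : nat) (u w : word) : x != y ->
  coef (divpow (rho d (delta_mx x y)) a * binomT (rho d (delta_mx x x)) b *
        divpow (rho d (delta_mx y x)) c) u w =
  fHe_entry #|occ x u| #|occ x w| #|occ x u :&: occ x w| a b c.
Proof.
move=> ne_xy; have ne_yx : y != x by rewrite eq_sym.
rewrite coefM -sum_subsets_fHe_entry -(sum_occ _ ne_xy); apply: eq_bigr => v _.
rewrite (coef_mul_diag (diag_binomT x b)) coef_divpow_unitC // coef_divpow_unit // subsetI.
case: (occ x v \subset occ x u); case: (occ x v \subset occ x w);
  case: (#|occ x u| == _)%N; case: (#|occ x w| == _)%N;
  by rewrite /= ?mul0r ?mulr0 ?mul1r ?mulr1.
Qed.

Lemma divpow_binomT_divpow_straighten (x y : 'I_2) (a b c : nat) :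
  x != y -> (0 < a + b + c - d)%N ->
  divpow (rho d (delta_mx x y)) a * binomT (rho d (delta_mx x x)) b *
    divpow (rho d (delta_mx y x)) c =
  \sum_((a + b + c - d)%N <= k < (minn a c).+1)
    (((-1) ^+ (k - (a + b + c - d)) * ('C(k.-1, (a + b + c - d).-1))%:R
       * ('C(b + k, k))%:R : rat)
     *: (divpow (rho d (delta_mx x y)) (a - k) * binomT (rho d (delta_mx x x)) (b + k)
         * divpow (rho d (delta_mx y x)) (c - k))).
Proof.
move=> ne_xy s_gt0; apply: coefP => u w.
rewrite coef_fHe // coef_sum; under eq_bigr do rewrite coefZ coef_fHe //.
apply: fHe_entry_straighten => //.
- exact/subset_leq_card/subsetIl.
- exact/subset_leq_card/subsetIr.
- by rewrite -cardsUI leq_add2r -[d in (_ <= d)%N]card_ord max_card.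
Qed.

End TensorCoefficients.

Theorem theorem2p5 (d a b c : nat) :
  (0 < a + b + c - d)%N ->
  (divpow (fop d) a * binomT (H2op d) b * divpow (eop d) c =
   \sum_((a + b + c - d)%N <= k < (minn a c).+1)
     (((-1) ^+ (k - (a + b + c - d)) * ('C(k.-1, (a + b + c - d).-1))%:R
        * ('C(b + k, k))%:R : rat)
      *: (divpow (fop d) (a - k) * binomT (H2op d) (b + k) * divpow (eop d) (c - k))))
  /\
  (divpow (eop d) a * binomT (H1op d) b * divpow (fop d) c =
   \sum_((a + b + c - d)%N <= k < (minn a c).+1)
     (((-1) ^+ (k - (a + b + c - d)) * ('C(k.-1, (a + b + c - d).-1))%:R
        * ('C(b + k, k))%:R : rat)
      *: (divpow (eop d) (a - k) * binomT (H1op d) (b + k) * divpow (fop d) (c - k)))).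
Proof.
by move=> s_gt0; split; apply: divpow_binomT_divpow_straighten.
Qed.
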